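(* Let $P$ be a finite poset (hence a DCPO) and $\theta$ an equivalence relation on $P$. Then $\theta$ is a natural DCPO congruence if and only if $\theta$ is a compatible congruence.
   Context: A subset $D$ of a poset is directed if every finite subset of $D$ has an upper bound in $D$ (in particular $D$ is nonempty). A poset is a DCPO (directed complete partial order) if every directed subset has a join. A map $\phi\colon P\to Q$ between DCPOs is a DCPO map if for every directed $D\subseteq P$, $\phi(D)$ is directed and $\phi(\bigvee D)=\bigvee\phi(D)$. For an equivalence relation $\theta$ with classes $[p]$, the quotient relation is $[p]\leqslant_\theta[q]$ iff there exist $p'\in[p]$, $q'\in[q]$ with $p'\leqslant q'$; $\theta$ is a natural DCPO congruence if the transitive closure of $\leqslant_\theta$ is a partial order on $P/\theta$ making it a DCPO and the canonical map $P\to P/\theta$ is a DCPO map. A $\theta$-circle is a sequence $(p_0,\dots,p_n)$ with $p_0=p_n$ and for each $i$ either $p_{i-1}\,\theta\,p_i$ or $p_{i-1}<p_i$; $\theta$ is a compatible congruence if every $\theta$-circle lies within one equivalence class. *)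

From mathcomp Require Import all_boot all_order.
From Stdlib Require Import Relations.
From Stdlib Require List.
Set Implicit Arguments. Unset Strict Implicit. Unset Printing Implicit Defensive.
Import Order.TTheory.
Local Open Scope order_scope.

Section Generic.
Variables (T : Type) (le : T -> T -> Prop).

Definition is_partial_order : Prop :=
  (forall x, le x x) /\
  (forall x y, le x y -> le y x -> x = y) /\
  (forall x y z, le x y -> le y z -> le x z).

Definition directed (D : T -> Prop) : Prop :=
  forall s : seq T, (forall x, List.In x s -> D x) ->
    exists2 z, D z & forall x, List.In x s -> le x z.

Definition is_join (D : T -> Prop) (j : T) : Prop :=
  (forall x, D x -> le x j) /\
  (forall u, (forall x, D x -> le x u) -> le j u).

Definition is_dcpo : Prop :=
  is_partial_order /\ forall D, directed D -> exists j, is_join D j.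
End Generic.

Definition img (A B : Type) (f : A -> B) (D : A -> Prop) : B -> Prop :=
  fun b => exists2 a, D a & f a = b.

Definition dcpo_map (A B : Type) (leA : A -> A -> Prop) (leB : B -> B -> Prop)
  (f : A -> B) : Prop :=
  forall D : A -> Prop, directed leA D ->
    directed leB (img f D) /\ forall j, is_join leA D j -> is_join leB (img f D) (f j).

Section Quotient.
Variables (d : Order.disp_t) (P : porderType d) (theta : P -> P -> Prop).

Definition eqclass (x : P) : P -> Prop := theta x.

Definition quot : Type := {A : P -> Prop | exists x : P, A = eqclass x}.

Definition quot_map (x : P) : quot := exist _ (eqclass x) (ex_intro _ x erefl).

Definition quot_le (A B : quot) : Prop :=
  exists p q, proj1_sig A p /\ proj1_sig B q /\ p <= q.

Definition quot_order : quot -> quot -> Prop := clos_trans quot quot_le.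

Definition poset_le (x y : P) : Prop := x <= y.

Definition natural_dcpo_congruence : Prop :=
  is_dcpo quot_order /\ dcpo_map poset_le quot_order quot_map.

(* theta-circles: (x0, s) stands for the sequence x0 :: s, whose consecutive
   entries are theta-related or strictly increasing, and which ends at x0 *)
Definition circ_step (x y : P) : Prop := theta x y \/ x < y.

Fixpoint circ_chain (x : P) (s : seq P) : Prop :=
  match s with
  | [::] => True
  | y :: s' => circ_step x y /\ circ_chain y s'
  end.

Definition theta_circle (x0 : P) (s : seq P) : Prop :=
  circ_chain x0 s /\ last x0 s = x0.

Definition compatible_congruence : Prop :=
  forall x0 s, theta_circle x0 s ->
    forall y z, List.In y (x0 :: s) -> List.In z (x0 :: s) -> theta y z.
End Quotient.

From mathcomp Require Import all_boot all_order.
From Stdlib Require Import Relations.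
From Stdlib Require Import Classical ProofIrrelevance FunctionalExtensionality PropExtensionality.
Set Implicit Arguments. Unset Strict Implicit. Unset Printing Implicit Defensive.
Import Order.TTheory.
Local Open Scope order_scope.

(* Over a type whose elements can all be listed, every directed set has a
   greatest element, which is then its join.  Consequently, for a finite poset
   P and an equivalence theta, the relation <=_theta* on P/theta (the
   transitive closure of <=_theta) is always reflexive and transitive, every
   directed set of classes has a join, and the canonical map P -> P/theta is
   always a DCPO map, since it is monotone and the join of a directed D in P is
   its greatest element.  Hence theta is a natural DCPO congruence exactly when
   <=_theta* is antisymmetric.  Finally, [x] <=_theta* [y] holds exactly when
   there is a theta-chain (steps theta-related or strictly increasing) from x
   to y, and the classes along such a chain increase; so antisymmetry of
   <=_theta* says precisely that every theta-circle stays inside one class. *)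

Lemma In_of_mem (T : eqType) (x : T) (s : seq T) : x \in s -> List.In x s.
Proof.
by elim: s => [|y s IH] //=; rewrite in_cons => /orP [/eqP ->|/IH]; [left|right].
Qed.

Lemma restrict_list (T : Type) (D : T -> Prop) (L : seq T) :
  exists s, (forall x, List.In x s -> D x) /\
            (forall x, List.In x L -> D x -> List.In x s).
Proof.
elim: L => [|y L [s [sD Ls]]]; first by exists [::].
case: (classic (D y)) => Dy.
- exists (y :: s); split.
  + by move=> x [<-|/sD].
  + by move=> x [<-|Lx] Dx; [left|right; apply: Ls].
- exists s; split=> // x [<-|Lx] Dx; [by []|exact: Ls].
Qed.

(* If all elements of T appear in a list L, a directed set in T has a
   greatest element: an upper bound of its (finite) listing. *)
Lemma directed_greatest (T : Type) (le : T -> T -> Prop) (D : T -> Prop)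
    (L : seq T) :
  (forall t, D t -> List.In t L) -> directed le D ->
  exists2 m, D m & forall x, D x -> le x m.
Proof.
move=> DL dirD; have [s [sD Ls]] := restrict_list D L.
have [m Dm ub_m] := dirD s sD.
by exists m => // x Dx; apply/ub_m/Ls/Dx/DL.
Qed.

Lemma greatest_is_join (T : Type) (le : T -> T -> Prop) (D : T -> Prop) (m : T) :
  D m -> (forall x, D x -> le x m) -> is_join le D m.
Proof. by move=> Dm ub_m; split=> // u; apply. Qed.

Lemma img_list_preimage (A B : Type) (f : A -> B) (D : A -> Prop) (s : seq B) :
  (forall x, List.In x s -> img f D x) ->
  exists t, (forall a, List.In a t -> D a) /\
            forall x, List.In x s -> exists2 a, List.In a t & f a = x.
Proof.
elim: s => [|y s IH] sD; first by exists [::].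
have [t [tD st]] := IH (fun x sx => sD x (or_intror sx)).
have [a Da fa] := sD y (or_introl erefl).
exists (a :: t); split; first by move=> b [<-|/tD].
move=> x [<-|/st [b tb fb]]; [by exists a; first left|by exists b; first right].
Qed.

Lemma directed_img (A B : Type) (leA : A -> A -> Prop) (leB : B -> B -> Prop)
    (f : A -> B) :
  (forall x y, leA x y -> leB (f x) (f y)) ->
  forall D, directed leA D -> directed leB (img f D).
Proof.
move=> f_mono D dirD s sD; have [t [tD st]] := img_list_preimage sD.
have [z Dz ub_z] := dirD t tD.
by exists (f z); [exists z|move=> x /st [a ta <-]; apply/f_mono/ub_z].
Qed.

Lemma quot_ext (d : Order.disp_t) (P : porderType d) (theta : P -> P -> Prop)
    (A B : quot theta) :
  proj1_sig A = proj1_sig B -> A = B.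
Proof.
by move: A B => [A pA] [B pB] /= eAB; subst B; congr exist; apply: proof_irrelevance.
Qed.

Section Quotient.
Variables (d : Order.disp_t) (P : finPOrderType d) (theta : P -> P -> Prop).
Hypothesis theta_equiv : equivalence P theta.

Let theta_refl x : theta x x := equiv_refl _ _ theta_equiv x.
Let theta_sym x y : theta x y -> theta y x := equiv_sym _ _ theta_equiv x y.
Let theta_trans x y z : theta x y -> theta y z -> theta x z :=
  equiv_trans _ _ theta_equiv x y z.

Definition quot_antisymmetric : Prop :=
  forall A B : quot theta, quot_order A B -> quot_order B A -> A = B.

Lemma quot_map_eq x y : theta x y -> quot_map theta x = quot_map theta y.
Proof.
move=> xy; apply: quot_ext; apply: functional_extensionality => z.
apply: propositional_extensionality; split=> xz.
- exact: theta_trans (theta_sym xy) xz.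
- exact: theta_trans xy xz.
Qed.

Lemma theta_of_quot_map_eq x y : quot_map theta x = quot_map theta y -> theta x y.
Proof. by move=> exy; have : proj1_sig (quot_map theta y) y by []; rewrite -exy. Qed.

Lemma quot_surj (A : quot theta) : exists x, A = quot_map theta x.
Proof. by case: (A) => A' [x eA]; exists x; apply: quot_ext. Qed.

Lemma quot_listed (A : quot theta) : List.In A (map (quot_map theta) (enum P)).
Proof. have [x ->] := quot_surj A; apply: List.in_map; apply: In_of_mem; exact: mem_enum. Qed.

Lemma quot_order_refl (A : quot theta) : quot_order A A.
Proof.
have [x ->] := quot_surj A; apply: t_step; exists x, x.
by split; [exact: theta_refl|split; [exact: theta_refl|exact: lexx]].
Qed.

Lemma quot_map_mono x y : x <= y -> quot_order (quot_map theta x) (quot_map theta y).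
Proof.
move=> xy; apply: t_step; exists x, y.
by split; [exact: theta_refl|split; [exact: theta_refl|]].
Qed.

(* Since P is finite, the canonical map is always a DCPO map: the join of a
   directed set is its greatest element, mapped to the greatest class. *)
Lemma quot_map_dcpo_map : dcpo_map (@poset_le _ P) (@quot_order _ P theta) (quot_map theta).
Proof.
move=> D dirD; split; first exact: directed_img quot_map_mono D dirD.
move=> j [ub_j lub_j].
have [m Dm ub_m] := directed_greatest (fun t _ => In_of_mem (mem_enum P t)) dirD.
have -> : j = m by apply/le_anti/andP; split; [exact: lub_j|exact: ub_j].
by apply: greatest_is_join; [exists m|move=> _ [x Dx <-]; apply/quot_map_mono/ub_m].
Qed.

Lemma quot_directed_join (D : quot theta -> Prop) :
  directed (@quot_order _ P theta) D -> exists J, is_join (@quot_order _ P theta) D J.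
Proof.
move=> dirD; have [m Dm ub_m] := directed_greatest (fun t _ => quot_listed t) dirD.
by exists m; apply: greatest_is_join.
Qed.

Lemma natural_iff_antisymmetric : natural_dcpo_congruence theta <-> quot_antisymmetric.
Proof.
split=> [[[[_ [antisym _]] _] _] //|antisym].
split; last exact: quot_map_dcpo_map.
split; last exact: quot_directed_join.
by split; [exact: quot_order_refl|split=> //; apply: t_trans].
Qed.

Lemma circ_step_of_le (p q : P) : p <= q -> circ_step theta p q.
Proof. by rewrite le_eqVlt => /orP [/eqP ->|pq]; [left|right]. Qed.

Lemma circ_chain_cat x s1 s2 :
  circ_chain theta x s1 -> circ_chain theta (last x s1) s2 ->
  circ_chain theta x (s1 ++ s2).
Proof. by elim: s1 x => [|y s1 IH] x //= [xy ys1] s2c; split=> //; apply: IH. Qed.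

(* If A <=_theta* B, any element of A is joined to any element of B by a
   theta-chain; a single <=_theta step from a to b gives a ~ p <= q ~ b. *)
Lemma circ_chain_of_quot_order (A B : quot theta) :
  quot_order A B -> forall a b, proj1_sig A a -> proj1_sig B b ->
  exists s, circ_chain theta a s /\ last a s = b.
Proof.
elim=> {A B} [A B [p [q [Ap [Bq pq]]]]|A B C _ IHAB _ IHBC] a b Aa Bb.
- have [x eA] := quot_surj A; have [y eB] := quot_surj B; subst A B.
  exists [:: p; q; b]; split=> //=; split; last split; last split=> //.
  + by left; apply: theta_trans (theta_sym Aa) Ap.
  + exact: circ_step_of_le.
  + by left; apply: theta_trans (theta_sym Bq) Bb.
- have [y eB] := quot_surj B; subst B.
  have [s1 [chain1 last1]] := IHAB a y Aa (theta_refl y).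
  have [s2 [chain2 last2]] := IHBC y b (theta_refl y) Bb.
  exists (s1 ++ s2); rewrite last_cat last1; split=> //.
  by apply: circ_chain_cat; rewrite ?last1.
Qed.

Lemma quot_order_along_chain x s : circ_chain theta x s ->
  forall y, List.In y (x :: s) ->
    quot_order (quot_map theta x) (quot_map theta y) /\
    quot_order (quot_map theta y) (quot_map theta (last x s)).
Proof.
elim: s x => [|z s IH] x /=; first by move=> _ y [<-|[]]; split; apply: quot_order_refl.
move=> [xz zs] y xy.
have le_xz : quot_order (quot_map theta x) (quot_map theta z).
  by case: xz => [/quot_map_eq ->|/ltW]; [apply: quot_order_refl|apply: quot_map_mono].
have [_ le_zlast] := IH z zs z (or_introl erefl).
case: xy => [<-|/(IH z zs) [le_zy le_ylast]]; split=> //.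
- exact: quot_order_refl.
- exact: t_trans le_xz le_zlast.
- exact: t_trans le_xz le_zy.
Qed.

(* Antisymmetry forces every theta-circle into one class: the classes along a
   circle increase and come back to the start. *)
Lemma compatible_of_antisymmetric : quot_antisymmetric -> compatible_congruence theta.
Proof.
move=> antisym x0 s [chain loop] y z ys zs.
have [le_x0y le_ylast] := quot_order_along_chain chain ys.
have [le_x0z le_zlast] := quot_order_along_chain chain zs.
rewrite loop in le_ylast le_zlast.
apply: theta_of_quot_map_eq; apply: antisym.
- exact: t_trans le_ylast le_x0z.
- exact: t_trans le_zlast le_x0y.
Qed.

(* Conversely, chains witnessing [x] <=_theta* [y] and [y] <=_theta* [x]
   concatenate to a theta-circle through x and y. *)
Lemma antisymmetric_of_compatible : compatible_congruence theta -> quot_antisymmetric.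
Proof.
move=> compat A B AB BA; have [x eA] := quot_surj A; have [y eB] := quot_surj B.
subst A B; apply: quot_map_eq.
have [s1 [chain1 last1]] := circ_chain_of_quot_order AB (theta_refl x) (theta_refl y).
have [s2 [chain2 last2]] := circ_chain_of_quot_order BA (theta_refl y) (theta_refl x).
have circle : theta_circle theta x (s1 ++ s2).
  by split; [apply: circ_chain_cat; rewrite ?last1|rewrite last_cat last1].
apply: (compat _ _ circle); first by left.
by apply: In_of_mem; rewrite -cat_cons mem_cat -last1 mem_last.
Qed.

End Quotient.

Theorem mainTheorem13 (d : Order.disp_t) (P : finPOrderType d)
  (theta : P -> P -> Prop) (Htheta : equivalence P theta) :
  natural_dcpo_congruence theta <-> compatible_congruence theta.
Proof.
apply: iff_trans (natural_iff_antisymmetric Htheta) _; split.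
- exact: compatible_of_antisymmetric.
- exact: antisymmetric_of_compatible.
Qed.
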